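(* Let $V$ be an $\hbar$-adic nonlocal vertex algebra and $S\subset V$ a subset such that for every positive integer $n$, $\{a+\hbar^nV:a\in S\}$ generates $V/\hbar^nV$ as a nonlocal vertex algebra (over $\mathbb{C}[\hbar]/\hbar^n\mathbb{C}[\hbar]$). Then $\langle S\rangle=V$.
   Context: A $\mathbb{C}[[\hbar]]$-module is topologically free if isomorphic to $V_0[[\hbar]]$ for some vector space $V_0$. An $\hbar$-adic nonlocal vertex algebra is a topologically free $\mathbb{C}[[\hbar]]$-module $V$ with a vector ${\bf 1}$ and a $\mathbb{C}[[\hbar]]$-linear map $Y(\cdot,x):V\to(\mathrm{End}V)[[x^{\pm1}]]$, $Y(v,x)=\sum_nv_nx^{-n-1}$, such that for each $n$ the reduction of $Y(u,x)w$ mod $\hbar^n$ lies in $(V/\hbar^nV)((x))$, $Y({\bf 1},x)=1$, $Y(v,x){\bf 1}\in V[[x]]$ with constant term $v$, and for $u,v,w\in V$ and every $n\ge1$ there is $l\ge0$ with $(z+y)^lY(u,z+y)Y(v,y)w\equiv(z+y)^lY(Y(u,z)v,y)w$ modulo $\hbar^nV[[z^{\pm1},y^{\pm1}]]$; then each $V/\hbar^nV$ is a nonlocal vertex algebra over $\mathbb{C}[\hbar]/(\hbar^n)$. For a submodule $U$, $\overline U$ denotes the $\hbar$-adic closure and $[U]=\{v:\hbar^nv\in U\text{ for some }n\}$. An $\hbar$-adic nonlocal vertex subalgebra is a $\mathbb{C}[[\hbar]]$-submodule $U$ with $[U]=U$, $\overline U=U$, ${\bf 1}\in U$ and $u_mv\in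 U$ for all $u,v\in U$, $m\in\mathbb Z$. $\langle S\rangle$ denotes the smallest $\hbar$-adic nonlocal vertex subalgebra of $V$ containing $S$ (explicitly, $\overline{[\cup_kS^{(k)}]}$ where $S^{(1)}=\mathbb{C}[[\hbar]]{\bf 1}+\mathbb{C}[[\hbar]]S$ and $S^{(k+1)}$ is the $\mathbb{C}[[\hbar]]$-span of $a_mb$, $a,b\in S^{(k)}$, $m\in\mathbb Z$). *)

(* C := R[i] (complex numbers over a realType R, i.e. a copy
   of the complex field), V0 : a C-vector space, and the topologically free
   C[[h]]-module V is modelled concretely as V0[[h]] = nat -> V0
   (coefficient sequences in powers of h). *)
From HB Require Import structures.
From mathcomp Require Import all_boot all_order all_algebra.
From mathcomp Require Import reals complex.
Set Implicit Arguments. Unset Strict Implicit. Unset Printing Implicit Defensive.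
Import Order.TTheory GRing.Theory Num.Theory.
Local Open Scope ring_scope.

Section HadicNVA.
Variable R : realType.
Local Notation C := (R[i]).
Variable V0 : lmodType C.

(* C[[h]] : formal power series, f k = coefficient of h^k *)
Definition pser := nat -> C.
Definition hser := nat -> V0.

Definition hpow (k : nat) : pser := fun i => if i == k then 1 else 0.

Definition hzero : hser := fun _ => 0.
Definition hadd (u v : hser) : hser := fun k => u k + v k.
Definition hsmul (f : pser) (v : hser) : hser :=
  fun k => \sum_(i < k.+1) f i *: v (k - i)%N.
Definition hscale (c : C) (v : hser) : hser := fun k => c *: v k.
Definition hsum (N : nat) (F : nat -> hser) : hser :=
  fun k => \sum_(i < N) F i k.

(* u = v mod h^n V  (i.e. u - v \in h^n V) *)
Definition eqmod (n : nat) (u v : hser) : Prop :=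
  forall k, (k < n)%N -> u k = v k.

Definition hlinear (f : hser -> hser) : Prop :=
  (forall u v, f (hadd u v) = hadd (f u) (f v)) /\
  (forall a v, f (hsmul a v) = hsmul a (f v)).

Definition binC (p : int) (i : nat) : C :=
  (\prod_(k < i) (p%:~R - k%:R)) / (i`!)%:R.

(* Y m u w := u_m w , i.e. Y(u,x) = sum_m (Y m u) x^{-m-1} *)
Definition vmodes := int -> hser -> hser -> hser.

(* Coefficient of z^p y^q in  Y(u,z+y) Y(v,y) w  (with (z+y)^{-m-1} expanded
   in nonnegative powers of y), truncated to the first N terms of the
   h-adically convergent sum over the power i of y:
   sum_i binom(p+i, i) u_{-p-1-i} v_{i-q-1} w. *)
Definition prod_coef_part (Y : vmodes) (u v w : hser) (p q : int) (N : nat)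
  : hser :=
  hsum N (fun i => hscale (binC (p + i%:Z) i)
                     (Y (- p - 1 - i%:Z) u (Y (i%:Z - q - 1) v w))).

(* Coefficient of z^p y^q in  Y(Y(u,z)v,y) w *)
Definition iter_coef (Y : vmodes) (u v w : hser) (p q : int) : hser :=
  Y (- q - 1) (Y (- p - 1) u v) w.

(* Coefficient of z^a y^b after multiplying a series G by (z+y)^l *)
Definition mul_zy_pow (l : nat) (G : int -> int -> hser) (a b : int) : hser :=
  hsum l.+1 (fun t => hscale ('C(l, t))%:R
                       (G (a - l%:Z + t%:Z) (b - t%:Z))).

Definition is_hNVA (vac : hser) (Y : vmodes) : Prop :=
  (forall m w, hlinear (fun u => Y m u w)) /\
  (forall m u, hlinear (Y m u)) /\
  (* Y(u,x)w mod h^n lies in (V/h^nV)((x)) *)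
  (forall (u w : hser) (n : nat), exists N : int,
      forall m : int, N <= m -> eqmod n (Y m u w) hzero) /\
  (forall m w, Y m vac w = if m == -1 then w else hzero) /\
  (* Y(v,x)1 \in V[[x]] with constant term v *)
  (forall v (m : int), 0 <= m -> Y m v vac = hzero) /\
  (forall v, Y (-1) v vac = v) /\
  (* weak associativity modulo h^n *)
  (forall (u v w : hser) (n : nat), (0 < n)%N -> exists l : nat,
      forall a b : int, exists N : nat, forall N' : nat, (N <= N')%N ->
        eqmod n
          (mul_zy_pow l (fun p q => prod_coef_part Y u v w p q N') a b)
          (mul_zy_pow l (iter_coef Y u v w) a b)).

Definition is_submod (U : hser -> Prop) : Prop :=
  U hzero /\ (forall u v, U u -> U v -> U (hadd u v)) /\
  (forall f u, U u -> U (hsmul f u)).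

Definition is_hsubalg (vac : hser) (Y : vmodes) (U : hser -> Prop) : Prop :=
  is_submod U /\
  (forall (k : nat) v, U (hsmul (hpow k) v) -> U v) /\
  (forall v, (forall n : nat, exists u, U u /\ eqmod n v u) -> U v) /\
  U vac /\
  (forall (m : int) u v, U u -> U v -> U (Y m u v)).

Definition hgen (vac : hser) (Y : vmodes) (S : hser -> Prop) : hser -> Prop :=
  fun v => forall U, is_hsubalg vac Y U -> (forall s, S s -> U s) -> U v.

(* Nonlocal vertex subalgebras of V/h^nV (over C[h]/h^n), represented by their
   preimages in V: subsets of V saturated for congruence mod h^nV. *)
Definition is_subalg_mod (n : nat) (vac : hser) (Y : vmodes)
  (T : hser -> Prop) : Prop :=
  (forall u v, eqmod n u v -> T u -> T v) /\
  is_submod T /\ T vac /\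
  (forall (m : int) u v, T u -> T v -> T (Y m u v)).

Definition generates_mod (n : nat) (vac : hser) (Y : vmodes)
  (S : hser -> Prop) : Prop :=
  forall T, is_subalg_mod n vac Y T -> (forall s, S s -> T s) -> forall v, T v.

End HadicNVA.

(* A subalgebra U containing S is dense: its saturation U + h^n V is a
   subalgebra of V modulo h^n, because C[[h]]-linearity makes every mode
   Y m compatible with congruence modulo h^n V.  Since it contains S, it is all
   of V, so every v is congruent to an element of U modulo every h^n, and v
   lies in U because U is h-adically closed. *)
From mathcomp Require Import all_boot all_order all_algebra.
From mathcomp Require Import reals complex.
From Stdlib Require Import FunctionalExtensionality.
Set Implicit Arguments.
Import GRing.Theory.
Local Open Scope ring_scope.

Section Congruence.
Variable R : realType.
Variable V0 : lmodType R[i].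
Implicit Types (n : nat) (u v w : hser V0).

Lemma eqmod_sym n u v : eqmod n u v -> eqmod n v u.
Proof. by move=> Huv k Hk; rewrite Huv. Qed.

Lemma eqmod_trans n u v w : eqmod n u v -> eqmod n v w -> eqmod n u w.
Proof. by move=> Huv Hvw k Hk; rewrite Huv // Hvw. Qed.

Lemma eqmod_leq m n u v : (m <= n)%N -> eqmod n u v -> eqmod m u v.
Proof. by move=> Hmn Huv k Hk; apply: Huv; apply: leq_trans Hmn. Qed.

Lemma eqmod_hadd n u u' v v' :
  eqmod n u u' -> eqmod n v v' -> eqmod n (hadd u v) (hadd u' v').
Proof. by move=> Hu Hv k Hk; rewrite /hadd Hu // Hv. Qed.

Lemma eqmod_hsmul n (f : pser R) u u' :
  eqmod n u u' -> eqmod n (hsmul f u) (hsmul f u').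
Proof.
move=> Hu k Hk; apply: eq_bigr => i _; rewrite Hu //.
exact: leq_ltn_trans (leq_subr _ _) Hk.
Qed.

Lemma hpow_coef_lt n k (i : 'I_k.+1) : (k < n)%N -> hpow R n i = 0.
Proof.
move=> Hk; rewrite /hpow; case: eqP => // Ein.
by move: (ltn_ord i); rewrite Ein ltnS leqNgt Hk.
Qed.

Lemma eqmod_hsmul_hpow0 n w : eqmod n (hsmul (hpow R n) w) (hzero V0).
Proof.
by move=> k Hk; rewrite /hsmul big1 // => i _; rewrite hpow_coef_lt ?scale0r.
Qed.

Lemma eqmod0_hsmul_hpow n w :
  eqmod n w (hzero V0) -> w = hsmul (hpow R n) (fun k => w (k + n)%N).
Proof.
move=> Hw; apply: functional_extensionality => k; rewrite /hsmul.
case: (leqP n k) => Hnk; last first.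
  by rewrite big1 ?Hw // => i _; rewrite hpow_coef_lt ?scale0r.
rewrite (bigD1 (Ordinal (Hnk : (n < k.+1)%N))) //= /hpow eqxx scale1r subnK //.
rewrite big1 ?addr0 // => i /eqP Hi; case: eqP => [Ein|_]; last by rewrite scale0r.
by case: Hi; apply: val_inj.
Qed.

Lemma eqmodP n u u' :
  eqmod n u u' -> exists w, u = hadd u' (hsmul (hpow R n) w).
Proof.
move=> Hu; set d := fun k => u k - u' k.
have Hd : eqmod n d (hzero V0) by move=> k Hk; rewrite /d Hu // subrr.
exists (fun k => d (k + n)%N); rewrite -(eqmod0_hsmul_hpow Hd).
by apply: functional_extensionality => k; rewrite /hadd /d addrC subrK.
Qed.

Lemma hlinear_eqmod n (f : hser V0 -> hser V0) u u' :
  hlinear f -> eqmod n u u' -> eqmod n (f u) (f u').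
Proof.
move=> [f_add f_smul] /eqmodP[w ->]; rewrite f_add f_smul.
by move=> k Hk; rewrite /hadd eqmod_hsmul_hpow0 // /hzero addr0.
Qed.

End Congruence.

Section Saturation.
Variable R : realType.
Variable V0 : lmodType R[i].
Variables (vac : hser V0) (Y : vmodes V0).
Hypothesis Y_linear_l : forall m w, hlinear (fun u => Y m u w).
Hypothesis Y_linear_r : forall m u, hlinear (Y m u).

Lemma Y_eqmod n m u u' w w' :
  eqmod n u u' -> eqmod n w w' -> eqmod n (Y m u w) (Y m u' w').
Proof.
move=> Hu Hw; apply: (eqmod_trans (v := Y m u' w)).
- exact: (hlinear_eqmod (f := fun u => Y m u w)).
- exact: hlinear_eqmod.
Qed.

Definition hsaturate n (U : hser V0 -> Prop) : hser V0 -> Prop :=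
  fun v => exists u, U u /\ eqmod n v u.

Lemma hsaturate_subalg_mod n (U : hser V0 -> Prop) :
  is_submod U -> U vac -> (forall m u v, U u -> U v -> U (Y m u v)) ->
  is_subalg_mod n vac Y (hsaturate n U).
Proof.
move=> [U0 [UD US]] Uvac UY; split; [|split; [|split]].
- move=> v v' Hvv' [u [Uu Hu]].
  by exists u; split; last exact: eqmod_trans (eqmod_sym Hvv') Hu.
- split; [|split].
  + by exists (hzero V0).
  + move=> v v' [u [Uu Hu]] [u' [Uu' Hu']].
    by exists (hadd u u'); split; [apply: UD | apply: eqmod_hadd].
  + move=> f v [u [Uu Hu]].
    by exists (hsmul f u); split; [apply: US | apply: eqmod_hsmul].
- by exists vac.
- move=> m v v' [u [Uu Hu]] [u' [Uu' Hu']].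
  by exists (Y m u u'); split; [apply: UY | apply: Y_eqmod].
Qed.

End Saturation.

Theorem lemma3p17 (R : realType) (V0 : lmodType R[i])
  (vac : hser V0) (Y : vmodes V0) (S : hser V0 -> Prop) :
  is_hNVA vac Y ->
  (forall n : nat, (0 < n)%N -> generates_mod n vac Y S) ->
  forall v : hser V0, hgen vac Y S v.
Proof.
move=> [Y_lin_l [Y_lin_r _]] Sgen v U [Usub [_ [Uclosed [Uvac UY]]]] SU.
apply: Uclosed => n.
have HT := hsaturate_subalg_mod vac Y Y_lin_l Y_lin_r n.+1 Usub Uvac UY.
have [u [Uu Hvu]] : hsaturate n.+1 U v.
  by apply: (Sgen n.+1 isT _ HT) => s Ss; exists s; split; [apply: SU|].
by exists u; split; last exact: eqmod_leq (leqnSn n) Hvu.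
Qed.
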